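(* Let $X$ be a finite two-wide poset and $f\colon X\to\mathbb R$ a Morse function on $X$. Then $f$ satisfies the Exclusion condition: for every regular (i.e. non-critical) point $x\in X$, exactly one of the following holds: (1) there exists exactly one $y\in X$ with $x\prec y$ and $f(x)\ge f(y)$; (2) there exists exactly one $w\in X$ with $w\prec x$ and $f(w)\ge f(x)$.
   Context: In a poset, write $a\prec b$ if $a<b$ and there is no $c$ with $a<c<b$. A poset $X$ is two-wide if for any $x,z,y$ with $x\prec z\prec y$ there is $z'\neq z$ with $x\prec z'\prec y$. A Morse function on a finite poset $X$ is a map $f\colon X\to\mathbb R$ such that for every $x\in X$, $\#\{y: x\prec y,\ f(x)\ge f(y)\}\le1$ and $\#\{w: w\prec x,\ f(w)\ge f(x)\}\le 1$. A point $x$ is critical if both these sets are empty; otherwise it is regular. *)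

From HB Require Import structures.
From mathcomp Require Import all_boot all_order all_algebra.
Set Implicit Arguments. Unset Strict Implicit. Unset Printing Implicit Defensive.
Import Order.TTheory GRing.Theory Num.Theory.

Local Open Scope order_scope.

Section Poset.
Variables (d : Order.disp_t) (X : finPOrderType d).

Definition covers (a b : X) : bool := (a < b) && [forall c : X, ~~ ((a < c) && (c < b))].

Definition two_wide : Prop :=
  forall x z y : X, covers x z -> covers z y ->
    exists z' : X, z' != z /\ covers x z' /\ covers z' y.

Variable R : realFieldType.
Variable f : X -> R.

Definition up_set (x : X) : {set X} := [set y | covers x y & (f y <= f x)%R].
Definition down_set (x : X) : {set X} := [set w | covers w x & (f x <= f w)%R].

Definition morse : Prop := forall x : X, #|up_set x| <= 1 /\ #|down_set x| <= 1.

Definition critical (x : X) : Prop := up_set x = set0 /\ down_set x = set0.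

Definition exclusion : Prop :=
  forall x : X, ~ critical x ->
    ((#|up_set x| == 1) (+) (#|down_set x| == 1))%B.
End Poset.

From HB Require Import structures.
From mathcomp Require Import all_boot all_order all_algebra.
Import Order.TTheory GRing.Theory Num.Theory.

Set Implicit Arguments.
Unset Strict Implicit.

(* If x had both an up-neighbour y and a down-neighbour w in the Morse sense
   (w ≺ x ≺ y with f y <= f x <= f w), two-wideness would give a second chain
   w ≺ x' ≺ y.  The Morse condition at w and at y forbids x' from being a
   second such neighbour there, so f w < f x' < f y, contradicting
   f y <= f w.  As both sets have at most one element, a non-critical point
   therefore has exactly one of them nonempty. *)

Lemma card_le1_eq1 (T : finType) (A : {set T}) :
  (#|A| <= 1)%N -> (#|A| == 1%N) = (A != set0).
Proof. by rewrite -card_gt0; case: #|A| => [|[|]]. Qed.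

Section MorseExclusion.
Variables (d : Order.disp_t) (X : finPOrderType d) (R : realFieldType).
Variable f : X -> R.
Hypotheses (X_two_wide : two_wide X) (f_morse : morse f).

Lemma morse_up_uniq (x y y' : X) :
  y \in up_set f x -> y' \in up_set f x -> y = y'.
Proof. by move=> hy hy'; apply: (card_le1_eqP (f_morse x).1). Qed.

Lemma morse_down_uniq (x w w' : X) :
  w \in down_set f x -> w' \in down_set f x -> w = w'.
Proof. by move=> hw hw'; apply: (card_le1_eqP (f_morse x).2). Qed.

Lemma morse_up_down_disjoint (x y w : X) :
  y \in up_set f x -> w \in down_set f x -> False.
Proof.
rewrite !inE => /andP[cxy fyx] /andP[cwx fxw].
have [x' [x'_neq_x [cwx' cx'y]]] := X_two_wide cwx cxy.
have fwx' : (f w < f x')%R.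
  rewrite ltNge; apply/negP => fx'w; apply: (negP x'_neq_x); apply/eqP.
  by apply: (@morse_up_uniq w); rewrite inE ?cwx' ?cwx.
have fx'y : (f x' < f y)%R.
  rewrite ltNge; apply/negP => fyx'; apply: (negP x'_neq_x); apply/eqP.
  by apply: (@morse_down_uniq y); rewrite inE ?cx'y ?cxy.
by move: (lt_trans fwx' fx'y); rewrite ltNge (le_trans fyx fxw).
Qed.

End MorseExclusion.

Theorem mainTheorem5 (d : Order.disp_t) (X : finPOrderType d)
  (R : realFieldType) (f : X -> R) :
  two_wide X -> morse f -> exclusion f.
Proof.
move=> tw mo x not_crit.
have [up_le1 down_le1] := mo x.
rewrite !card_le1_eq1 //.
have [up0|[y yup]] := set_0Vmem (up_set f x);
  have [down0|[w wdown]] := set_0Vmem (down_set f x).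
- by case: not_crit.
- by rewrite up0 eqxx; apply/set0Pn; exists w.
- by rewrite down0 eqxx addbF; apply/set0Pn; exists y.
- by case: (morse_up_down_disjoint tw mo yup wdown).
Qed.
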